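(* Let $G=D_\infty=\langle s\rangle\rtimes\langle t\rangle$ and let $\alpha,\beta:\mathbb{Z}\curvearrowright X_0$ be two minimal topologically free continuous actions on a compact Hausdorff space $X_0$. Let $\widetilde\alpha,\widetilde\beta:G\curvearrowright X:=G/\mathbb{Z}\times X_0$ be the associated induced actions (with $\mathbb{Z}=\langle s\rangle$ and lift $L(\mathbb{Z})=e$, $L(t\mathbb{Z})=t$). Then: (1) if $\widetilde\alpha$ and $\widetilde\beta$ are continuously orbit equivalent via the identity homeomorphism of $X$ (i.e. there are continuous $c,c':G\times X\to G$ with $\widetilde\alpha_g(\tilde x)=\widetilde\beta_{c(g,\tilde x)}(\tilde x)$ and $\widetilde\beta_g(\tilde x)=\widetilde\alpha_{c'(g,\tilde x)}(\tilde x)$), then $\alpha$ and $\beta$ are continuously orbit equivalent; (2) if $\alpha$ and $\beta$ are continuously orbit equivalent, then $\widetilde\alpha$ and $\widetilde\beta$ are conjugate.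
   Context: Induced action: with $\delta:G\times G/\mathbb{Z}\to\mathbb{Z}$, $\delta(g,g'\mathbb{Z})=L(gg'\mathbb{Z})^{-1}gL(g'\mathbb{Z})$, set $\widetilde\alpha_g(g'\mathbb{Z},x)=(gg'\mathbb{Z},\ \alpha_{\delta(g,g'\mathbb{Z})}(x))$, and similarly for $\beta$. Continuous orbit equivalence of two actions $\gamma,\gamma'$ of a group $\Gamma$ on a space $Z$: a homeomorphism $\phi:Z\to Z$ with inverse $\psi$ and continuous $a,b:\Gamma\times Z\to\Gamma$ with $\phi(\gamma_g z)=\gamma'_{a(g,z)}\phi(z)$ and $\psi(\gamma'_h z)=\gamma_{b(h,z)}\psi(z)$. Conjugacy: a homeomorphism $\phi$ and an automorphism $\tau$ of $\Gamma$ with $\phi(\gamma_g z)=\gamma'_{\tau(g)}\phi(z)$ for all $g,z$. *)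

From HB Require Import structures.
From mathcomp Require Import all_boot all_order all_algebra.
From mathcomp Require Import all_classical all_reals all_analysis.
Set Implicit Arguments. Unset Strict Implicit. Unset Printing Implicit Defensive.
Import Order.TTheory GRing.Theory Num.Theory.
Local Open Scope classical_set_scope.
Local Open Scope ring_scope.

(* (n, b) stands for s^n t^b ; t s t^-1 = s^-1. *)
Definition Dinf := (int * bool)%type.
Definition dmul (g h : Dinf) : Dinf :=
  (g.1 + (if g.2 then - h.1 else h.1), xorb g.2 h.2).
Definition dinv (g : Dinf) : Dinf := ((if g.2 then g.1 else - g.1), g.2).
Definition done_ : Dinf := (0, false).
Definition ds : Dinf := (1, false).
Definition dt : Dinf := (0, true).
Definition dZ (n : int) : Dinf := (n, false).

(* G/Z is identified with bool: false = Z, true = tZ.  coset map g |-> gZ *)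
Definition dcoset (g : Dinf) : bool := g.2.
Definition dcoset_act (g : Dinf) (c : bool) : bool := dcoset (dmul g (if c then dt else done_)).
Definition Llift (c : bool) : Dinf := if c then dt else done_.

(* cocycle delta(g, g'Z) = L(gg'Z)^-1 g L(g'Z), an element of Z = <s>,
   returned as its exponent n (delta = s^n). *)
Definition delta (g : Dinf) (c : bool) : int :=
  (dmul (dinv (Llift (dcoset_act g c))) (dmul g (Llift c))).1.

Definition dinf_automorphism (tau : Dinf -> Dinf) : Prop :=
  bijective tau /\ forall g h, tau (dmul g h) = dmul (tau g) (tau h).

Section ZActions.
Variable X0 : topologicalType.

Definition is_Zaction (a : int -> X0 -> X0) : Prop :=
  (forall x, a 0 x = x) /\ (forall m n x, a (m + n) x = a m (a n x)) /\
  (forall n, continuous (a n)).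

Definition Zminimal (a : int -> X0 -> X0) : Prop :=
  forall x, closure (range (fun n => a n x)) = [set: X0].

Definition Ztopfree (a : int -> X0 -> X0) : Prop :=
  forall n : int, n != 0 -> interior [set x | a n x = x] = set0.
End ZActions.

(* continuity of a map into a discrete group (Z or D_inf) = local constancy *)
Definition cont_discr {T : topologicalType} {A : Type} (f : T -> A) : Prop :=
  forall x, \forall y \near x, f y = f x.

Definition homeo {T : topologicalType} (phi psi : T -> T) : Prop :=
  continuous phi /\ continuous psi /\ cancel phi psi /\ cancel psi phi.

Definition Z_coe {X0 : topologicalType} (a b : int -> X0 -> X0) : Prop :=
  exists (phi psi : X0 -> X0) (ca cb : int -> X0 -> int),
    homeo phi psi /\ (forall n, cont_discr (ca n)) /\ (forall n, cont_discr (cb n)) /\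
    (forall n x, phi (a n x) = b (ca n x) (phi x)) /\
    (forall n x, psi (b n x) = a (cb n x) (psi x)).

Definition ind_act {X0 : Type} (a : int -> X0 -> X0) (g : Dinf)
  (p : bool * X0) : bool * X0 :=
  (dcoset_act g p.1, a (delta g p.1) p.2).

Definition Dinf_conj {Z : topologicalType} (ga gb : Dinf -> Z -> Z) : Prop :=
  exists (phi psi : Z -> Z) (tau : Dinf -> Dinf),
    homeo phi psi /\ dinf_automorphism tau /\
    forall g z, phi (ga g z) = gb (tau g) (phi z).

From HB Require Import structures.
From mathcomp Require Import all_boot all_order all_algebra.
From mathcomp Require Import all_classical all_reals all_analysis.
From mathcomp Require Import zify.
Import Order.TTheory GRing.Theory Num.Theory.
Set Implicit Arguments. Unset Strict Implicit. Unset Printing Implicit Defensive.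
Local Open Scope classical_set_scope.
Local Open Scope ring_scope.

(* (1) Over the fibre {Z} x X0 the element s^n acts by alpha_n (resp. beta_n), so
   restricting orbit cocycles c, c' of the identity map to g = s^n and to that
   fibre gives a continuous orbit equivalence of alpha and beta (with phi = id).

   (2) Boyle-Tomiyama: a continuous orbit equivalence (phi, ca) of free (= minimal
   and topologically free) Z-actions is a flip conjugacy.  For every x the map
   k_x = ca(., x) is a bijection of Z fixing 0 whose steps are bounded by
   M = max |ca(1, .)| (compactness).  Such a sequence either ascends (-oo to +oo)
   or descends; this orientation is locally constant and invariant along alpha-
   orbits, hence constant by minimality.  In the ascending case the index
   j(x) = lim_L #{n in [-L, L] | k_x(n) >= 0} - (L + 1) is locally constant and
   satisfies j(alpha_1 x) = j(x) - ca(1, x) + 1, so x |-> beta_(j x) (phi x)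
   conjugates alpha to beta; the descending case is the ascending one for
   n |-> beta_(-n).  A (flip) conjugacy h then induces the conjugacy
   (c, x) |-> (flip (+) c, h x) of the induced actions, with tau = id. *)

Implicit Types (k : int -> int) (M R : int) (N L : nat).

Definition steps_le M k := forall n, -M <= k (n + 1) - k n <= M.

Definition covers k N R :=
  forall v, -R <= v <= R -> exists n, -(N%:Z) <= n <= N%:Z /\ k n = v.

Definition ascends k R N := covers k N R /\ R < k N%:Z /\ k (- N%:Z) < - R.
Definition descends k R N := covers k N R /\ k N%:Z < - R /\ R < k (- N%:Z).

(* the shape of n |-> ca(n, x) for an orbit cocycle ca of free Z-actions *)
Definition bounded_bij M k :=
  k 0 = 0 /\ injective k /\ (forall v, exists n, k n = v) /\ steps_le M k.

Lemma steps_le_ge0 M k : steps_le M k -> 0 <= M.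
Proof. by move=> /(_ 0); lia. Qed.

(* Escaping [-R, R] for good: once an injective k with steps <= M <= R has
   covered [-R, R] and exceeds R, a step back down would land in [-R, R], on a
   value already taken inside the window. *)
Lemma escape_above_right M R N k : injective k -> steps_le M k -> M <= R ->
  covers k N R -> R < k N%:Z -> forall n, N%:Z <= n -> R < k n.
Proof.
move=> inj st MR cov kN.
have above m : R < k (N%:Z + m%:Z).
  elim: m => [|m IH]; first by rewrite addr0.
  have := st (N%:Z + m%:Z).
  have -> : N%:Z + m%:Z + 1 = N%:Z + m.+1%:Z by lia.
  move=> step; case: (ltrP R (k (N%:Z + m.+1%:Z))) => // back.
  have [n [Hn Hkn]] := cov (k (N%:Z + m.+1%:Z)) ltac:(lia).
  by have := inj _ _ Hkn; lia.
move=> n Nn; have := above (absz (n - N%:Z)).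
by have -> : N%:Z + (absz (n - N%:Z))%:Z = n by lia.
Qed.

Lemma steps_le_opp M k : steps_le M k -> steps_le M (fun n => - k n).
Proof. by move=> st n; have := st n; lia. Qed.

Lemma steps_le_rev M k : steps_le M k -> steps_le M (fun n => k (- n)).
Proof.
move=> st n; have := st (- n - 1).
have -> : - n - 1 + 1 = - n by lia.
have -> : - (n + 1) = - n - 1 by lia.
lia.
Qed.

Lemma covers_opp k N R : covers k N R -> covers (fun n => - k n) N R.
Proof. by move=> cov v Hv; have [n [Hn Hk]] := cov (- v) ltac:(lia); exists n; lia. Qed.

Lemma covers_rev k N R : covers k N R -> covers (fun n => k (- n)) N R.
Proof.
move=> cov v Hv; have [n [Hn Hk]] := cov v Hv.
by exists (- n); rewrite opprK; split=> //; lia.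
Qed.

Lemma inj_opp k : injective k -> injective (fun n => - k n).
Proof. by move=> inj a b /oppr_inj /inj. Qed.

Lemma inj_rev k : injective k -> injective (fun n => k (- n)).
Proof. by move=> inj a b /inj /oppr_inj. Qed.

Lemma escape_below_right M R N k : injective k -> steps_le M k -> M <= R ->
  covers k N R -> k N%:Z < - R -> forall n, N%:Z <= n -> k n < - R.
Proof.
move=> inj st MR cov kN n Nn.
have := escape_above_right (inj_opp inj) (steps_le_opp st) MR (covers_opp cov)
  ltac:(lia) Nn.
lia.
Qed.

Lemma escape_above_left M R N k : injective k -> steps_le M k -> M <= R ->
  covers k N R -> R < k (- N%:Z) -> forall n, n <= - N%:Z -> R < k n.
Proof.
move=> inj st MR cov kN n nN.
have := escape_above_right (inj_rev inj) (steps_le_rev st) MR (covers_rev cov) kN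
  (n := - n) ltac:(lia).
by rewrite opprK.
Qed.

Lemma escape_below_left M R N k : injective k -> steps_le M k -> M <= R ->
  covers k N R -> k (- N%:Z) < - R -> forall n, n <= - N%:Z -> k n < - R.
Proof.
move=> inj st MR cov kN n nN.
have := escape_above_left (inj_opp inj) (steps_le_opp st) MR (covers_opp cov)
  ltac:(lia) nN.
lia.
Qed.

Lemma bounded_bij_opp M k : bounded_bij M k -> bounded_bij M (fun n => - k n).
Proof.
move=> [k0 [inj [surj st]]]; split; first by rewrite k0 oppr0.
split; first exact: inj_opp.
split; last exact: steps_le_opp.
by move=> v; have [n Hn] := surj (- v); exists n; rewrite Hn opprK.
Qed.

Lemma descends_opp k R N : descends k R N -> ascends (fun n => - k n) R N.
Proof. by move=> [cov [H1 H2]]; split; [exact: covers_opp | lia]. Qed.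

Lemma steps_growth M k : k 0 = 0 -> steps_le M k -> forall m : nat,
  -(M * m%:Z) <= k m%:Z <= M * m%:Z /\ -(M * m%:Z) <= k (- m%:Z) <= M * m%:Z.
Proof.
move=> k0 st; elim=> [|m IH]; first by rewrite mulr0 oppr0 k0.
have right_step : -M <= k (m%:Z + 1) - k m%:Z <= M := st m%:Z.
have left_step : -M <= k (- m%:Z) - k (- m%:Z - 1) <= M.
  by have := st (- m%:Z - 1); have -> // : - m%:Z - 1 + 1 = - m%:Z by lia.
have -> : - m.+1%:Z = - m%:Z - 1 by lia.
have -> : m.+1%:Z = m%:Z + 1 by lia.
rewrite mulrDr mulr1; lia.
Qed.

Lemma steps_growth_window M k N : k 0 = 0 -> steps_le M k ->
  forall n, -(N%:Z) <= n <= N%:Z -> -(M * N%:Z) <= k n <= M * N%:Z.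
Proof.
move=> k0 st n Hn; have M0 := steps_le_ge0 st.
have [n0|n0] := lerP 0 n.
  have [h _] := steps_growth k0 st (absz n).
  have e : (absz n)%:Z = n by lia.
  by rewrite e in h; nia.
have [_ h] := steps_growth k0 st (absz n).
have e : - (absz n)%:Z = n by lia.
have e' : (absz n)%:Z = - n by lia.
by rewrite e e' in h; nia.
Qed.

(* A bounded bijection cannot escape upwards on both sides: the large
   negative values would then never be attained. *)
Lemma not_above_both_sides M R N k : bounded_bij M k -> M <= R -> covers k N R ->
  R < k N%:Z -> R < k (- N%:Z) -> False.
Proof.
move=> [k0 [inj [surj st]]] MR cov h1 h2; have M0 := steps_le_ge0 st.
have [n Hn] := surj (- (R + M * N%:Z + 1)).
have [Hin|Hout] := boolP ((-(N%:Z) <= n) && (n <= N%:Z)).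
  by have := steps_growth_window (N := N) k0 st Hin; move/andP: Hin; nia.
have [Hr|Hl] : N%:Z <= n \/ n <= - N%:Z by lia.
  by have := escape_above_right inj st MR cov h1 Hr; nia.
by have := escape_above_left inj st MR cov h2 Hl; nia.
Qed.

Lemma covers_exist k : (forall v, exists n, k n = v) -> k 0 = 0 ->
  forall r : nat, exists N, covers k N r%:Z.
Proof.
move=> surj k0; elim=> [|r [N IH]].
  by exists 0%N => v Hv; exists 0; rewrite k0; split; lia.
have [n1 h1] := surj r.+1%:Z; have [n2 h2] := surj (- r.+1%:Z).
exists (N + absz n1 + absz n2)%N => v Hv.
have [->|ne1] := eqVneq v r.+1%:Z; first by exists n1; split; [lia|].
have [->|ne2] := eqVneq v (- r.+1%:Z); first by exists n2; split; [lia|].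
by have [n [Hn Hk]] := IH v ltac:(lia); exists n; split=> //; lia.
Qed.

Lemma covers_mono k N N' R : (N <= N')%N -> covers k N R -> covers k N' R.
Proof. by move=> le cov v Hv; have [n [Hn Hk]] := cov v Hv; exists n; split=> //; lia. Qed.

Lemma ascends_or_descends M R k : bounded_bij M k -> M <= R ->
  exists N, ascends k R N \/ descends k R N.
Proof.
move=> bk MR; have [k0 [inj [surj st]]] := bk.
have [N cov] := covers_exist surj k0 (absz R).
have eR : (absz R)%:Z = R by have := steps_le_ge0 st; lia.
rewrite eR in cov.
have cov1 := covers_mono (leqnSn N) cov.
have outside n : N%:Z < n \/ n < - N%:Z -> R < k n \/ k n < - R.
  move=> Hn; case: (lerP (k n) R) => h1; last by left.
  case: (lerP (- R) (k n)) => h2; last by right.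
  have [m [Hm Hkm]] := cov (k n) ltac:(lia).
  by have := inj _ _ Hkm; lia.
exists N.+1.
have [a1|a2] := outside N.+1%:Z ltac:(lia);
  have [b1|b2] := outside (- N.+1%:Z) ltac:(lia).
- by case: (not_above_both_sides bk MR cov1 a1 b1).
- by left.
- by right.
- case: (not_above_both_sides (bounded_bij_opp bk) MR (covers_opp cov1)); lia.
Qed.

(* The two orientations exclude each other: far to the right k would have to be
   both above R and below -R'. *)
Lemma not_ascends_and_descends M R R' N N' k : injective k -> steps_le M k ->
  M <= R -> M <= R' -> ascends k R N -> descends k R' N' -> False.
Proof.
move=> inj st MR MR' [c1 [p1 p2]] [c2 [m1 m2]].
have M0 := steps_le_ge0 st.
have := escape_above_right inj st MR c1 p1 (n := (N + N')%:Z) ltac:(lia).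
have := escape_below_right inj st MR' c2 m1 (n := (N + N')%:Z) ltac:(lia).
lia.
Qed.

Lemma ascends_any_radius M N k : bounded_bij M k -> ascends k M N ->
  forall R, M <= R -> exists N', ascends k R N'.
Proof.
move=> bk asc R MR; have [N' [H|H]] := ascends_or_descends bk MR; first by exists N'.
have [_ [inj [_ st]]] := bk.
by case: (not_ascends_and_descends inj st (lexx M) MR asc H).
Qed.

(* The orientation is invariant under the shift k'(n) = k(n + m) - k(m), which
   is how the cocycle of x relates to the cocycle of alpha_m x. *)
Lemma shift_keeps_orientation M N N' m k k' : bounded_bij M k -> bounded_bij M k' ->
  (forall n, k' n = k (n + m) - k m) -> descends k M N -> ascends k' M N' -> False.
Proof.
move=> bk bk' shift desc asc.
have [_ [inj [_ st]]] := bk; have [_ [inj' [_ st']]] := bk'.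
have M0 := steps_le_ge0 st.
pose R := M + (absz (k m))%:Z.
have [N2 [c2 [p1 p2]]] := ascends_any_radius bk' asc (R := R) ltac:(lia).
have [c3 [q1 q2]] := desc.
pose n := N2%:Z + N%:Z + (absz m)%:Z.
have := escape_above_right inj' st' (R := R) ltac:(lia) c2 p1 (n := n) ltac:(lia).
have := escape_below_right inj st (lexx M) c3 q1 (n := n + m) ltac:(lia).
rewrite shift; lia.
Qed.

Fixpoint window L : seq int :=
  if L is L'.+1 then (- L%:Z) :: rcons (window L') L%:Z else [:: 0].

Lemma mem_window L n : (n \in window L) = (- L%:Z <= n <= L%:Z).
Proof.
elim: L => [|L IH] /=; first by rewrite in_cons in_nil orbF; apply/eqP/idP; lia.
rewrite in_cons mem_rcons in_cons IH.
apply/idP/idP; first by case/orP => [/eqP->|/orP [/eqP->|h]]; lia.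
move=> h; have [//|ne] := eqVneq n (- L.+1%:Z).
have [//|ne'] := eqVneq n L.+1%:Z.
by move/eqP: ne; move/eqP: ne'; lia.
Qed.

Lemma uniq_window L : uniq (window L).
Proof.
elim: L => [|L IH] //=.
rewrite rcons_uniq IH mem_rcons in_cons !mem_window !negb_or.
by apply/and3P; split; [apply/eqP | apply/negP | apply/negP]; lia.
Qed.

Lemma count_window P L :
  count P (window L.+1) = (P (- L.+1%:Z) + count P (window L) + P L.+1%:Z)%N.
Proof. by rewrite /= -cats1 count_cat /= addn0 addnA. Qed.

(* The number of n in [-L, L] with k n >= 0, minus L + 1.  For an ascending k it
   is eventually constant: its limit is the index used to straighten ca. *)
Definition index_at k L : int :=
  (count (fun n => 0 <= k n) (window L))%:Z - L.+1%:Z.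

Lemma index_at_ext k k' L :
  (forall n, -(L%:Z) <= n <= L%:Z -> k n = k' n) -> index_at k L = index_at k' L.
Proof.
move=> e; rewrite /index_at; congr (Posz _ - _).
by apply: eq_in_count => n; rewrite mem_window => /e /= ->.
Qed.

(* Past an ascending radius, the new left endpoint is negative and the new right
   endpoint nonnegative, so index_at no longer changes. *)
Lemma index_at_stable M R N k : bounded_bij M k -> M <= R -> ascends k R N ->
  forall L, (N <= L)%N -> index_at k L = index_at k N.
Proof.
move=> [k0 [inj [surj st]]] MR [cov [p1 p2]].
have M0 := steps_le_ge0 st.
have step L : (N <= L)%N -> index_at k L.+1 = index_at k L.
  move=> NL; rewrite /index_at count_window.
  have := escape_below_left inj st MR cov p2 (n := - L.+1%:Z) ltac:(lia).
  have := escape_above_right inj st MR cov p1 (n := L.+1%:Z) ltac:(lia).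
  move=> above below.
  have -> : (0 <= k L.+1%:Z) = true by lia.
  have -> : (0 <= k (- L.+1%:Z)) = false by apply/negbTE; rewrite -ltNge; lia.
  lia.
move=> L NL; rewrite -(subnKC NL).
elim: (L - N)%N => [|d IH]; first by rewrite addn0.
by rewrite addnS step ?leq_addr.
Qed.

Lemma count_window_shift (P : pred int) L :
  (count P [seq (n + 1)%R | n <- window L] + P (- L%:Z) =
   count P (window L) + P L.+1%:Z)%N.
Proof.
elim: L => [|L IH]; first by rewrite /= !addn0 addnC.
rewrite count_window /= map_rcons -cats1 count_cat /= addn0.
have -> : - L.+1%:Z + 1 = - L%:Z by lia.
have -> : L.+1%:Z + 1 = L.+2%:Z by lia.
move: IH; move: (count P _) (count P (window L)) (nat_of_bool (P (- L%:Z)))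
  (nat_of_bool (P (- L.+1%:Z))) (nat_of_bool (P L.+1%:Z))
  (nat_of_bool (P L.+2%:Z)) => a b c d e f; lia.
Qed.

(* On a window containing a cover of [-R, R], each value in [-R, R] is hit
   exactly once, so raising a threshold b in [-R, R] by one drops the count by one. *)
Lemma count_threshold_step k N R L (b : int) : injective k -> covers k N R -> (N <= L)%N ->
  -R <= b <= R ->
  count (fun n => b <= k n) (window L) =
  (count (fun n => (b + 1 <= k n)%R) (window L) + 1)%N.
Proof.
move=> inj cov NL Hb.
have := count_predUI (fun n => b + 1 <= k n) (fun n => k n == b) (window L).
rewrite (@eq_count _ (predU _ _) (fun n => b <= k n)); last first.
  move=> n /=; apply/idP/idP; first by case/orP=> [|/eqP]; lia.
  by have [->|ne] := eqVneq (k n) b; rewrite ?orbT ?orbF //; lia.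
rewrite (@eq_count _ (predI _ _) pred0); last by move=> n /=; apply/negP; lia.
rewrite count_pred0 addn0 => ->; congr (_ + _)%N.
have -> : count (fun n => k n == b) (window L) = count_mem b (map k (window L)).
  by rewrite count_map.
rewrite count_uniq_mem ?(map_inj_uniq inj) ?uniq_window //.
have [n [Hn <-]] := cov b Hb.
by rewrite map_f // mem_window; lia.
Qed.

Lemma count_threshold k N R L (d : nat) (a : int) : injective k -> covers k N R ->
  (N <= L)%N -> -R <= a -> a + d%:Z <= R + 1 ->
  count (fun n => a <= k n) (window L) =
  (count (fun n => (a + d%:Z <= k n)%R) (window L) + d)%N.
Proof.
move=> inj cov NL; elim: d a => [|d IH] a h1 h2; first by rewrite addr0 addn0.
rewrite IH ?(count_threshold_step inj cov NL (b := a + d%:Z)); try lia.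
have -> : a + d%:Z + 1 = a + d.+1%:Z by lia.
by rewrite -addnA add1n.
Qed.

Lemma count_threshold_int k N R L (f : int) : injective k -> covers k N R -> (N <= L)%N ->
  -R <= f <= R ->
  (count (fun n => f <= k n) (window L))%:Z =
  (count (fun n => 0 <= k n) (window L))%:Z - f.
Proof.
move=> inj cov NL hf.
have [f0|f0] := lerP 0 f.
  have e : count (fun n => 0 <= k n) (window L) =
           (count (fun n => (f <= k n)%R) (window L) + absz f)%N.
    have := count_threshold (d := absz f) (a := 0) inj cov NL ltac:(lia) ltac:(lia).
    by have -> : 0 + (absz f)%:Z = f by lia.
  by rewrite e; lia.
have e : count (fun n => f <= k n) (window L) =
         (count (fun n => (0 <= k n)%R) (window L) + absz f)%N.
  have := count_threshold (d := absz f) (a := f) inj cov NL ltac:(lia) ltac:(lia).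
  by have -> : f + (absz f)%:Z = 0 by lia.
by rewrite e; lia.
Qed.

Lemma index_at_shift M N k k' : bounded_bij M k -> ascends k M N ->
  (forall n, k' n = k (n + 1) - k 1) ->
  forall L, (N <= L)%N -> index_at k' L = index_at k L - k 1 + 1.
Proof.
move=> [k0 [inj [surj st]]] [cov [p1 p2]] shift L NL.
have M0 := steps_le_ge0 st.
have k1 : -M <= k 1 <= M by have := st 0; rewrite add0r k0 subr0.
pose P : pred int := fun n => k 1 <= k n.
have E0 : count (fun n => 0 <= k' n) (window L) = count P [seq (n + 1)%R | n <- window L].
  by rewrite count_map; apply: eq_count => n /=; rewrite /P shift subr_ge0.
have E1 : count P [seq (n + 1)%R | n <- window L] = (count P (window L) + 1)%N.
  have := escape_below_left inj st (lexx M) cov p2 (n := - L%:Z) ltac:(lia).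
  have := escape_above_right inj st (lexx M) cov p1 (n := L.+1%:Z) ltac:(lia).
  move=> above below; have := count_window_shift P L.
  have -> : P L.+1%:Z = true by rewrite /P; lia.
  have -> : P (- L%:Z) = false by apply/negbTE; rewrite /P -ltNge; lia.
  by rewrite addn0.
have E2 := count_threshold_int (f := k 1) inj cov NL k1.
by rewrite /index_at E0 E1 PoszD E2; lia.
Qed.

Definition free_action (X0 : Type) (a : int -> X0 -> X0) :=
  forall n x, a n x = x -> n = 0.

Definition coe_data {X0 : topologicalType} (a b : int -> X0 -> X0)
  (phi psi : X0 -> X0) (ca cb : int -> X0 -> int) : Prop :=
  homeo phi psi /\ (forall n, cont_discr (ca n)) /\ (forall n, cont_discr (cb n)) /\
  (forall n x, phi (a n x) = b (ca n x) (phi x)) /\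
  (forall n x, psi (b n x) = a (cb n x) (psi x)).

Definition flip_conj {X0 : topologicalType} (a b : int -> X0 -> X0) :=
  exists (flip : bool) (h g : X0 -> X0),
    homeo h g /\ forall n x, h (a n x) = b (if flip then - n else n) (h x).

Lemma closed_fixed_points (T : topologicalType) (f : T -> T) :
  hausdorff_space T -> continuous f -> closed [set y | f y = y].
Proof.
move=> hT cf y cly; apply: hT => A B nA nB.
have nfA : nbhs y (f @^-1` A) := cf y A nA.
have [z [fz [Az Bz]]] := cly _ (filterI nfA nB).
by exists z; split=> //; rewrite -fz.
Qed.

(* Minimal and topologically free actions on Hausdorff spaces are free: the
   fixed points of a_n form a closed invariant set, which contains an orbit. *)
Lemma minimal_topfree_free (X0 : topologicalType) (a : int -> X0 -> X0) :
  hausdorff_space X0 -> is_Zaction a -> Zminimal a -> Ztopfree a -> free_action a.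
Proof.
move=> hT [a0 [aD ac]] amin afree n x hx.
apply/eqP; apply/negPn/negP => n0.
have orbit_fixed : range (fun m => a m x) `<=` [set y | a n y = y].
  by move=> _ [m _ <-] /=; rewrite -aD addrC aD hx.
have all_fixed : [set y | a n y = y] = setT.
  apply/seteqP; split=> // y _.
  apply: (closed_fixed_points hT (ac n)); apply: (closure_subset orbit_fixed).
  by rewrite amin.
have := afree n n0; rewrite all_fixed interiorT => e.
by have : (setT : set X0) x by []; rewrite e.
Qed.

Lemma locconst_bounded (T : topologicalType) (f : T -> int) :
  compact [set: T] -> cont_discr f -> exists M, forall x, -M <= f x <= M.
Proof.
move=> cT cf.
have := (iffLR (compact_near_coveringP _) cT) nat \oo
  (fun m x => -(m%:Z) <= f x <= m%:Z) _.
case.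
  move=> x _; exists ([set y | f y = f x], [set m | (absz (f x) <= m)%N]).
    by split=> //=; [exact: cf x | exists (absz (f x))].
  by move=> [y m] /= [-> h]; lia.
by move=> N _ HN; exists N%:Z => x; exact: HN N (leqnn N) x I.
Qed.

Lemma near_window (T : topologicalType) (ca : int -> T -> int) :
  (forall n, cont_discr (ca n)) -> forall x N,
  \forall y \near x, forall n, -(N%:Z) <= n <= N%:Z -> ca n y = ca n x.
Proof.
move=> cc x; elim=> [|N IH].
  by apply: filterS (cc 0 x) => y h n hn; have -> : n = 0 by lia.
apply: filterS2 IH (filterI (cc N.+1%:Z x) (cc (- N.+1%:Z) x)) => y h [h1 h2] n hn.
have [->|ne] := eqVneq n N.+1%:Z; first by [].
have [->|ne'] := eqVneq n (- N.+1%:Z); first by [].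
by apply: h; move/eqP: ne; move/eqP: ne'; lia.
Qed.

Lemma near_ascends (T : topologicalType) (ca : int -> T -> int) M N x :
  (forall n, cont_discr (ca n)) ->
  ascends (fun n => ca n x) M N -> \forall y \near x, ascends (fun n => ca n y) M N.
Proof.
move=> cc [cov [p1 p2]].
apply: filterS (near_window cc x N) => y hw.
split; last by rewrite !hw //; lia.
by move=> v hv; have [n [hn e]] := cov v hv; exists n; rewrite hw.
Qed.

Lemma free_orbit_inj (X0 : topologicalType) (a : int -> X0 -> X0) :
  is_Zaction a -> free_action a -> forall p q y, a p y = a q y -> p = q.
Proof.
move=> [a0 [aD _]] fr p q y e.
have : a (p - q) y = y by rewrite addrC aD e -aD addNr a0.
by move/fr/eqP; rewrite subr_eq0 => /eqP.
Qed.

Lemma equivariant_generator (X0 : topologicalType) (a b : int -> X0 -> X0) (h : X0 -> X0) :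
  is_Zaction a -> is_Zaction b ->
  (forall x, h (a 1 x) = b 1 (h x)) -> forall n x, h (a n x) = b n (h x).
Proof.
move=> [a0 [aD _]] [b0 [bD _]] h1.
have hnat (m : nat) x : h (a m%:Z x) = b m%:Z (h x).
  elim: m x => [|m IH] x; first by rewrite a0 b0.
  have -> : m.+1%:Z = 1 + m%:Z by lia.
  by rewrite aD h1 IH bD.
move=> [] m x; first exact: hnat.
rewrite NegzE.
have e : b m.+1%:Z (h (a (- m.+1%:Z) x)) = h x by rewrite -hnat -aD addrN a0.
by rewrite -e -bD addNr b0.
Qed.

Lemma continuous_act_locconst (T X : topologicalType) (a : int -> X -> X)
  (j : T -> int) (f : T -> X) :
  (forall n, continuous (a n)) -> cont_discr j -> continuous f ->
  continuous (fun x => a (j x) (f x)).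
Proof.
move=> ac cj cf x.
have e : {near x, (fun y => a (j x) (f y)) =1 (fun y => a (j y) (f y))}.
  by apply: filterS (cj x) => y /= ->.
apply: cvg_trans (near_eq_cvg e) _.
exact: (continuous_comp (cf x) (ac (j x) (f x))).
Qed.

Section OrbitEquivalence.
Variables (X0 : topologicalType) (a b : int -> X0 -> X0).
Variables (phi psi : X0 -> X0) (ca cb : int -> X0 -> int).
Hypotheses (ha : is_Zaction a) (hb : is_Zaction b).
Hypotheses (fra : free_action a) (frb : free_action b).
Hypothesis hc : coe_data a b phi psi ca cb.

Lemma coe_cocycle n m x : ca (n + m) x = ca n (a m x) + ca m x.
Proof.
have [_ [_ [_ [ea _]]]] := hc; have [_ [aD _]] := ha; have [_ [bD _]] := hb.
apply: (free_orbit_inj hb frb (y := phi x)).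
by rewrite -ea aD ea ea bD.
Qed.

Variable M : int.
Hypothesis hM : forall x, -M <= ca 1 x <= M.

(* n |-> ca n x is a bounded bijection: injective because phi is, surjective
   because psi maps the beta-orbit of phi x into the alpha-orbit of x. *)
Lemma coe_bounded_bij x : bounded_bij M (fun n => ca n x).
Proof.
have [[_ [_ [phiK psiK]]] [_ [_ [ea eb]]]] := hc.
have [a0 _] := ha; have [b0 _] := hb.
split; first by apply: (free_orbit_inj hb frb (y := phi x)); rewrite -ea a0 b0.
split.
  move=> p q e; apply: (free_orbit_inj ha fra (y := x)).
  by rewrite -[a p x]phiK -[a q x]phiK ea e -ea.
split.
  move=> v; exists (cb v (phi x)); apply: (free_orbit_inj hb frb (y := phi x)).
  have e : a (cb v (phi x)) x = psi (b v (phi x)) by rewrite eb phiK.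
  by rewrite -ea e psiK.
by move=> n; rewrite (addrC n 1) coe_cocycle addrK; exact: hM.
Qed.

Lemma coe_shift m x n : ca n (a m x) = ca (n + m) x - ca m x.
Proof. by rewrite coe_cocycle addrK. Qed.

Lemma coe_orientation : Zminimal a ->
  (forall x, exists N, ascends (fun n => ca n x) M N) \/
  (forall x, exists N, descends (fun n => ca n x) M N).
Proof.
move=> amin; have cc : forall n, cont_discr (ca n) by case: hc => [_ []].
have [[x0 [N0 asc0]]|none] :=
  pselect (exists x0 N, ascends (fun n => ca n x0) M N).
  left=> y; have [N [asc|desc]] := ascends_or_descends (coe_bounded_bij y) (lexx M).
    by exists N.
  have cly : closure (range (fun n => a n y)) x0 by rewrite amin.
  have [_ [[m _ <-] asc]] := cly _ (near_ascends cc asc0).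
  by case: (shift_keeps_orientation (coe_bounded_bij y) (coe_bounded_bij (a m y))
    (coe_shift m y) desc asc).
right=> y; have [N [asc|desc]] := ascends_or_descends (coe_bounded_bij y) (lexx M).
  by case: none; exists y, N.
by exists N.
Qed.

Section Ascending.
Hypothesis hasc : forall x, exists N, ascends (fun n => ca n x) M N.

Definition asc_radius x : nat := sval (cid (hasc x)).

Lemma asc_radiusP x : ascends (fun n => ca n x) M (asc_radius x).
Proof. exact: svalP (cid (hasc x)). Qed.

Definition coe_index x := index_at (fun n => ca n x) (asc_radius x).

Lemma coe_indexE x N L : ascends (fun n => ca n x) M N -> (N <= L)%N ->
  coe_index x = index_at (fun n => ca n x) L.
Proof.
move=> asc NL; have bx := coe_bounded_bij x; have asc0 := asc_radiusP x.
rewrite /coe_index (index_at_stable bx (lexx M) asc NL).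
rewrite -(index_at_stable bx (lexx M) asc0 (leq_maxl _ N)).
by rewrite (index_at_stable bx (lexx M) asc (leq_maxr _ N)).
Qed.

(* The index is locally constant, as the cocycle is on any finite window. *)
Lemma coe_index_locconst : cont_discr coe_index.
Proof.
move=> x; have cc : forall n, cont_discr (ca n) by case: hc => [_ []].
pose N := asc_radius x.
apply: filterS (filterI (near_window cc x N) (near_ascends cc (asc_radiusP x))).
move=> y [hw asc]; rewrite (coe_indexE asc (leqnn N)).
exact: index_at_ext.
Qed.

(* The index is a transfer function: it corrects ca(1, .) to the constant 1. *)
Lemma coe_index_shift x : coe_index (a 1 x) = coe_index x - ca 1 x + 1.
Proof.
have asc := asc_radiusP x; have asc' := asc_radiusP (a 1 x).
pose L := maxn (asc_radius x) (asc_radius (a 1 x)).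
rewrite (coe_indexE asc' (leq_maxr _ _ : (_ <= L)%N)).
rewrite (coe_indexE asc (leq_maxl _ _ : (_ <= L)%N)).
exact: (index_at_shift (coe_bounded_bij x) asc (coe_shift 1 x) (leq_maxl _ _)).
Qed.

Definition straighten x := b (coe_index x) (phi x).

(* By coe_index_shift, straighten intertwines alpha_1 and beta_1, hence alpha and beta. *)
Lemma straighten_equivariant n x : straighten (a n x) = b n (straighten x).
Proof.
have [_ [_ [_ [ea _]]]] := hc; have [_ [bD _]] := hb.
apply: equivariant_generator ha hb _ n x => y.
by rewrite /straighten coe_index_shift ea -!bD; congr (b _ _); lia.
Qed.

(* straighten x = straighten x' forces x' into the alpha-orbit of x, at a
   beta-period 0 of straighten x by freeness of beta. *)
Lemma straighten_inj : injective straighten.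
Proof.
have [[_ [_ [phiK _]]] [_ [_ [_ eb]]]] := hc; have [b0 [bD _]] := hb.
have [a0 _] := ha.
move=> x x' e.
have e1 : phi x' = b (coe_index x - coe_index x') (phi x).
  by have := congr1 (b (- coe_index x')) e; rewrite /straighten -!bD addNr b0 addrC => <-.
have e2 : x' = a (cb (coe_index x - coe_index x') (phi x)) x.
  transitivity (psi (phi x')); first by rewrite phiK.
  by rewrite e1 eb phiK.
have : b (cb (coe_index x - coe_index x') (phi x)) (straighten x) = straighten x.
  by rewrite -straighten_equivariant -e2.
by move/frb => p0; rewrite e2 p0 a0.
Qed.

Lemma coe_conj_ascending :
  exists h g : X0 -> X0, homeo h g /\ forall n x, h (a n x) = b n (h x).
Proof.
have [[cphi [cpsi [_ psiK]]] _] := hc.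
have [b0 [bD bcont]] := hb; have [_ [_ acont]] := ha.
pose g y := a (- coe_index (psi y)) (psi y).
have straightenK : cancel g straighten.
  by move=> y; rewrite /g straighten_equivariant /straighten -bD addNr b0 psiK.
exists straighten, g; split; last exact: straighten_equivariant.
split; first exact: continuous_act_locconst bcont coe_index_locconst cphi.
have index_psi_locconst : cont_discr (fun y => - coe_index (psi y)).
  move=> y; have near_psi : \forall z \near y, coe_index (psi z) = coe_index (psi y).
    exact: cpsi y _ (coe_index_locconst (psi y)).
  by apply: filterS near_psi => z /= ->.
split; first exact: continuous_act_locconst acont index_psi_locconst cpsi.
by split=> // x; apply: straighten_inj; rewrite straightenK.
Qed.

End Ascending.
End OrbitEquivalence.

Lemma coe_data_rev (X0 : topologicalType) (a b : int -> X0 -> X0) phi psi ca cb :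
  coe_data a b phi psi ca cb ->
  coe_data a (fun n => b (- n)) phi psi (fun n x => - ca n x) (fun n y => cb (- n) y).
Proof.
move=> [hp [cc [ccb [ea eb]]]]; split=> //.
split; first by move=> n x; apply: filterS (cc n x) => y /= ->.
split; first by move=> n; exact: ccb.
by split=> n x; rewrite ?opprK ?ea ?eb.
Qed.

Lemma is_Zaction_rev (X0 : topologicalType) (b : int -> X0 -> X0) :
  is_Zaction b -> is_Zaction (fun n => b (- n)).
Proof.
move=> [b0 [bD bc]]; split; first by rewrite oppr0.
by split=> [m n x|n]; [rewrite opprD bD | exact: bc].
Qed.

Lemma free_action_rev (X0 : Type) (b : int -> X0 -> X0) :
  free_action b -> free_action (fun n => b (- n)).
Proof. by move=> fr n x /fr /eqP; rewrite oppr_eq0 => /eqP. Qed.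

Lemma coe_flip_conj (X0 : topologicalType) (a b : int -> X0 -> X0) :
  compact [set: X0] -> hausdorff_space X0 -> is_Zaction a -> is_Zaction b ->
  Zminimal a -> Zminimal b -> Ztopfree a -> Ztopfree b ->
  Z_coe a b -> flip_conj a b.
Proof.
move=> cX hX ha hb amin bmin atf btf [phi [psi [ca [cb hc]]]].
have fra := minimal_topfree_free hX ha amin atf.
have frb := minimal_topfree_free hX hb bmin btf.
have cc1 : cont_discr (ca 1) by case: hc => [_ [cc _]]; exact: cc.
have [M hM] := locconst_bounded cX cc1.
have [asc|desc] := coe_orientation ha hb fra frb hc hM amin.
  have [h [g [hg eh]]] := coe_conj_ascending ha hb fra frb hc hM asc.
  by exists false, h, g.
have hM' x : -M <= - ca 1 x <= M by have := hM x; lia.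
have asc x : exists N, ascends (fun n => - ca n x) M N.
  by have [N desc_x] := desc x; exists N; exact: descends_opp.
have [h [g [hg eh]]] := coe_conj_ascending ha (is_Zaction_rev hb) fra
  (free_action_rev frb) (coe_data_rev hc) hM' asc.
by exists true, h, g.
Qed.

Lemma ind_actE (X0 : Type) (a : int -> X0 -> X0) n (bb c : bool) x :
  ind_act a (n, bb) (c, x) = (xorb bb c, a (if xorb bb c then - n else n) x).
Proof. by rewrite /ind_act /delta; case: bb; case: c => /=; congr (_, a _ x); lia. Qed.

Lemma continuous_fibre (X : topologicalType) : continuous (fun y : X => (false, y)).
Proof.
move=> x; have fst_cvg : (fun y : X => false) @ x --> false by exact: cvg_cst.
exact: cvg_pair fst_cvg cvg_id.
Qed.

Lemma continuous_pair_map (X : topologicalType) (F : bool -> bool) (f : X -> X) :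
  continuous f -> continuous (fun p : bool * X => (F p.1, f p.2)).
Proof.
move=> cf [c x].
have fst_cvg : (fun p : bool * X => F p.1) @ nbhs (c, x) --> F c.
  apply/discrete_cvg; exists ([set c], setT) => /=.
    by split; [exact: (@discrete_set1 bool c) | exact: filterT].
  by move=> [c' y] /= [-> _].
have snd_cvg : (fun p : bool * X => f p.2) @ nbhs (c, x) --> f x.
  exact: cvg_comp (@cvg_snd _ _ (nbhs c) (nbhs x) _) (cf x).
exact: cvg_pair fst_cvg snd_cvg.
Qed.

Lemma homeo_pair_map (X : topologicalType) (F : bool -> bool) (h g : X -> X) :
  involutive F -> homeo h g ->
  homeo (fun p : bool * X => (F p.1, h p.2)) (fun p : bool * X => (F p.1, g p.2)).
Proof.
move=> iF [ch [cg [hK gK]]]; do 2 (split; first exact: continuous_pair_map).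
by split=> [] [c x] /=; rewrite iF ?hK ?gK.
Qed.

Lemma fibre_cocycle (X0 : topologicalType) (a b : int -> X0 -> X0)
  (c : Dinf -> bool * X0 -> Dinf) :
  (forall g, cont_discr (c g)) -> (forall g p, ind_act a g p = ind_act b (c g p) p) ->
  (forall n, cont_discr (fun x => (c (dZ n) (false, x)).1)) /\
  (forall n x, a n x = b (c (dZ n) (false, x)).1 x).
Proof.
move=> cc e; split.
  move=> n x.
  have near_c : \forall y \near x, c (dZ n) (false, y) = c (dZ n) (false, x).
    exact: continuous_fibre (cc (dZ n) (false, x)).
  by apply: filterS near_c => y /= ->.
move=> n x; have := e (dZ n) (false, x).
case: (c (dZ n) (false, x)) => m bb; rewrite /dZ !ind_actE.
by case: bb => -[].
Qed.

Lemma induced_conj (X0 : topologicalType) (a b : int -> X0 -> X0) :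
  flip_conj a b -> Dinf_conj (ind_act a) (ind_act b).
Proof.
move=> [flip [h [g [hg eh]]]].
exists (fun p => (xorb flip p.1, h p.2)), (fun p => (xorb flip p.1, g p.2)), id.
split; first by apply: homeo_pair_map => // c; case: (flip); case: c.
split; first by split=> //; exists id.
move=> [n bb] [c x]; rewrite !ind_actE eh /=.
by case: (flip); case: bb; case: c; rewrite /= ?opprK.
Qed.

Theorem mainTheorem12 (X0 : topologicalType)
  (hcomp : compact [set: X0]) (hhaus : hausdorff_space X0)
  (alpha beta : int -> X0 -> X0)
  (ha : is_Zaction alpha) (hb : is_Zaction beta)
  (hamin : Zminimal alpha) (hbmin : Zminimal beta)
  (hafree : Ztopfree alpha) (hbfree : Ztopfree beta) :
  ((exists c c' : Dinf -> bool * X0 -> Dinf,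
       (forall g, cont_discr (c g)) /\ (forall g, cont_discr (c' g)) /\
       (forall g p, ind_act alpha g p = ind_act beta (c g p) p) /\
       (forall g p, ind_act beta g p = ind_act alpha (c' g p) p)) ->
     Z_coe alpha beta)
  /\
  (Z_coe alpha beta -> Dinf_conj (ind_act alpha) (ind_act beta)).
Proof.
split; last first.
  by move=> coe; apply: induced_conj; exact: coe_flip_conj.
move=> [c [c' [cc [cc' [e e']]]]].
have [cd ed] := fibre_cocycle cc e; have [cd' ed'] := fibre_cocycle cc' e'.
exists id, id, (fun n x => (c (dZ n) (false, x)).1),
  (fun n x => (c' (dZ n) (false, x)).1).
have id_cont : continuous (@id X0) by move=> x; exact: cvg_id.
by do !split.
Qed.
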